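(* Let $(\mathcal{V},g)$ be a real scalar product space of dimension $n>2m$, let $J_1,\dots,J_m$ be skew-adjoint endomorphisms of $\mathcal{V}$ with $J_iJ_j+J_jJ_i=2\delta_{ij}\,\mathrm{id}$ for $1\le i,j\le m$, and let $\mu_0\in\mathbb{R}$ and $\mu_1,\dots,\mu_m\in\mathbb{R}\setminus\{0\}$. Suppose there exist $\theta_0,\dots,\theta_m\in\mathbb{R}$, not all zero, and a nonzero $X\in\mathcal{V}$ such that $\theta_0X+\theta_1J_1X+\dots+\theta_mJ_mX=0$ and $$\theta_0^2=\sum_{i=1}^m\theta_i^2=-\mu_0\sum_{i=1}^m\frac{\theta_i^2}{3\mu_i}.$$ Then the (anti-Clifford) algebraic curvature tensor $R=\mu_0R^0+\sum_{i=1}^m\mu_iR^{J_i}$ is not totally Jacobi-dual.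
   Context: A scalar product space is a finite-dimensional real vector space with a nondegenerate symmetric bilinear form $g$; $\varepsilon_X=g(X,X)$. $R^0(X,Y,Z,W)=g(Y,Z)g(X,W)-g(X,Z)g(Y,W)$; for skew-adjoint $J$, $R^J(X,Y,Z,W)=g(JX,Z)g(JY,W)-g(JY,Z)g(JX,W)+2g(JX,Y)g(JZ,W)$. The Jacobi operator is $\mathcal{J}_X(Y)=\sum_{i}\varepsilon_{E_i}R(Y,X,X,E_i)E_i$ for an orthonormal basis $(E_i)$. An eigenvector of $\mathcal{J}_X$ is a nonzero $Y$ with $\mathcal{J}_X(Y)=\lambda Y$, $\lambda\in\mathbb{R}$. $R$ is totally Jacobi-dual if for all $X,Y\in\mathcal{V}$ with $X\neq0$: whenever $Y$ is an eigenvector of $\mathcal{J}_X$, then $X$ is an eigenvector of $\mathcal{J}_Y$. *)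

(* Scalar product space modelled as row vectors 'rV[R]_n
   with a symmetric invertible Gram matrix G: g(x,y) = x G y^T. *)
From HB Require Import structures.
From mathcomp Require Import all_boot all_order all_algebra.
From mathcomp Require Import reals.
Set Implicit Arguments. Unset Strict Implicit. Unset Printing Implicit Defensive.
Import Order.TTheory GRing.Theory Num.Theory.
Local Open Scope ring_scope.

Section Defs.
Variables (R : realType) (n : nat) (G : 'M[R]_n).

Definition gform (x y : 'rV[R]_n) : R := (x *m G *m y^T) 0 0.

Definition scalar_product_space : Prop := G^T = G /\ G \in unitmx.

Definition skew_adjoint (J : 'M[R]_n) : Prop :=
  forall x y, gform (x *m J) y = - gform x (y *m J).

Definition R0 (X Y Z W : 'rV[R]_n) : R :=
  gform Y Z * gform X W - gform X Z * gform Y W.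

Definition RJ (J : 'M[R]_n) (X Y Z W : 'rV[R]_n) : R :=
  gform (X *m J) Z * gform (Y *m J) W - gform (Y *m J) Z * gform (X *m J) W
  + 2 * gform (X *m J) Y * gform (Z *m J) W.

Definition antiClifford_tensor (m : nat) (J : 'I_m -> 'M[R]_n)
  (mu0 : R) (mu : 'I_m -> R) (X Y Z W : 'rV[R]_n) : R :=
  mu0 * R0 X Y Z W + \sum_(i < m) mu i * RJ (J i) X Y Z W.

(* Jacobi operator J_X(Y) = sum_i eps_i R(Y,X,X,E_i) E_i, written in
   coordinates w.r.t. the standard basis e_j: the unique vector v with
   g(v, e_j) = R(Y,X,X,e_j) for all j, i.e. v = r G^{-1}. *)
Definition jacobi_op (Rt : 'rV[R]_n -> 'rV[R]_n -> 'rV[R]_n -> 'rV[R]_n -> R)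
  (X Y : 'rV[R]_n) : 'rV[R]_n :=
  (\row_j Rt Y X X (delta_mx 0 j)) *m invmx G.

Definition is_eigenvector (f : 'rV[R]_n -> 'rV[R]_n) (Y : 'rV[R]_n) : Prop :=
  Y != 0 /\ exists lam : R, f Y = lam *: Y.

Definition totally_jacobi_dual
  (Rt : 'rV[R]_n -> 'rV[R]_n -> 'rV[R]_n -> 'rV[R]_n -> R) : Prop :=
  forall X Y : 'rV[R]_n, X != 0 ->
    is_eigenvector (jacobi_op Rt X) Y -> is_eigenvector (jacobi_op Rt Y) X.

End Defs.

From mathcomp Require Import all_boot all_order all_algebra.
From mathcomp Require Import reals.
From mathcomp Require Import ring lra zify.
Set Implicit Arguments. Unset Strict Implicit. Unset Printing Implicit Defensive.
Import Order.TTheory GRing.Theory Num.Theory.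
Local Open Scope ring_scope.

(* Put A := sum_i theta_i J_i and P := theta_0 + A, so that X P = 0.  The Clifford
   relations give A^2 = theta_0^2, hence P^2 = 2 theta_0 P; also X is null.
   Skew-adjointness makes ker P totally isotropic, so rank P >= n/2, while the rows
   X J_i P are dependent (theta kills them).  Hence, as n > 2m, some U orthogonal to
   X has U P outside span (X J_i): otherwise X^perp P = X^perp P^2 / (2 theta_0)
   would lie in span (X J_i P).  The X J_i being independent, there is Y with
   g(Y, X J_i) = theta_i / (3 mu_i) and g(Y, U P) = 1.  The relation between
   theta_0, theta and mu_0 then makes J_X(Y) = 0, whereas g(J_Y(X), U) = -1
   although g(X, U) = 0: X is no eigenvector of J_Y. *)

Section Form.
Variables (R : realType) (n : nat) (G : 'M[R]_n).

Lemma gformDl x y z : gform G (x + y) z = gform G x z + gform G y z.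
Proof. by rewrite /gform !mulmxDl mxE. Qed.

Lemma gformZl a x z : gform G (a *: x) z = a * gform G x z.
Proof. by rewrite /gform -!scalemxAl mxE. Qed.

Lemma gformNl x z : gform G (- x) z = - gform G x z.
Proof. by rewrite -scaleN1r gformZl mulN1r. Qed.

Lemma gform_suml I (r : seq I) (P : pred I) (f : I -> 'rV[R]_n) z :
  gform G (\sum_(i <- r | P i) f i) z = \sum_(i <- r | P i) gform G (f i) z.
Proof. by rewrite /gform !mulmx_suml summxE. Qed.

Lemma gformDr x y z : gform G z (x + y) = gform G z x + gform G z y.
Proof. by rewrite /gform linearD /= mulmxDr mxE. Qed.

Lemma gformNr x z : gform G z (- x) = - gform G z x.
Proof. by rewrite /gform linearN /= mulmxN mxE. Qed.

Lemma gformZr a x z : gform G z (a *: x) = a * gform G z x.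
Proof. by rewrite /gform linearZ /= -scalemxAr mxE. Qed.

Lemma gform_sumr I (r : seq I) (P : pred I) (f : I -> 'rV[R]_n) z :
  gform G z (\sum_(i <- r | P i) f i) = \sum_(i <- r | P i) gform G z (f i).
Proof. by rewrite /gform raddf_sum mulmx_sumr summxE. Qed.

Lemma gformC x y : G^T = G -> gform G x y = gform G y x.
Proof.
move=> G_sym; rewrite /gform -[in RHS]G_sym -[in RHS](trmxK y) -!trmx_mul.
by rewrite mulmxA [RHS]mxE.
Qed.

Lemma gform_rowE k (A B : 'M[R]_(k, n)) i j :
  (A *m G *m B^T) i j = gform G (row i A) (row j B).
Proof. by rewrite /gform tr_row colE mulmxA -colE -!row_mul !mxE. Qed.

Hypothesis G_unit : G \in unitmx.

Lemma jacobi_opE Rt X Y V :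
  (forall W, Rt Y X X W = gform G V W) -> jacobi_op G Rt X Y = V.
Proof.
move=> RtV; rewrite /jacobi_op.
suff -> : \row_j Rt Y X X (delta_mx 0 j) = V *m G by rewrite mulmxK.
by apply/rowP => j; rewrite mxE RtV /gform trmx_delta -colE mxE.
Qed.

Lemma gform_dual_exists k (N : 'M[R]_(k, n)) (c : 'rV[R]_k) :
  row_free N -> exists Y, forall i, gform G Y (row i N) = c 0 i.
Proof.
case/row_freeP=> B NB; exists (c *m B^T *m invmx G) => i.
rewrite /gform mulmxKV // -mulmxA -trmx_mul -row_mul NB tr_row trmx1 colE mul1mx.
by rewrite -colE mxE.
Qed.

Lemma isotropic_rank k (K : 'M[R]_(k, n)) :
  (forall i j, gform G (row i K) (row j K) = 0) -> (2 * \rank K <= n)%N.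
Proof.
move=> iso; have KGK : K *m G *m K^T = 0.
  by apply/matrixP => i j; rewrite gform_rowE iso mxE.
have := mulmx0_rank_max KGK.
by rewrite mxrankMfree ?row_free_unit // mxrank_tr mul2n -addnn.
Qed.

Lemma rank_orthogonal (X : 'rV[R]_n) :
  X != 0 -> \rank (kermx (G *m X^T)) = n.-1.
Proof.
move=> X_neq0; rewrite mxrank_ker -[X^T]trmxK -[G]trmxK -trmx_mul mxrank_tr.
by rewrite mxrankMfree ?row_free_unit ?unitmx_tr // rank_rV trmxK X_neq0 subn1.
Qed.

End Form.

Section RowSpaces.
Variable F : fieldType.

Lemma row_free_col_mx_rV m n (A : 'M[F]_(m, n)) (v : 'rV[F]_n) :
  row_free A -> ~~ (v <= A)%MS -> row_free (col_mx A v).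
Proof.
move=> /eqP rkA vA; rewrite -row_leq_rank -addsmxE.
have : (\rank A < \rank (A + v)%MS)%N.
  by rewrite (ltn_leqif (mxrank_leqif_sup (addsmxSl A v))) addsmx_sub submx_refl.
by rewrite rkA addn1.
Qed.

Lemma rank_lt_of_mul0 m n (r : 'rV[F]_m) (M : 'M[F]_(m, n)) :
  r != 0 -> r *m M = 0 -> (\rank M < m)%N.
Proof. by move=> r_neq0 /mulmx0_rank_max; rewrite rank_rV r_neq0. Qed.

Lemma rank_sub_scaled_idem n k l (P : 'M[F]_n) (Q : 'M[F]_(k, n))
    (S : 'M[F]_(l, n)) s :
  P *m P = s *: P -> s != 0 -> (Q *m P <= S)%MS ->
  (\rank Q + \rank P <= \rank (S *m P) + n)%N.
Proof.
move=> PP s_neq0 QPS; have : (\rank (Q *m P) <= \rank (S *m P))%N.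
  apply: mxrankS; rewrite -(scalerK s_neq0 (Q *m P)) scalemx_sub //.
  by rewrite scalemxAr -PP mulmxA submxMr.
by have := mxrank_mul_min Q P; lia.
Qed.

End RowSpaces.

Lemma sum_sqr_eq0 (R : realDomainType) (I : finType) (F : I -> R) :
  \sum_i F i ^+ 2 = 0 -> forall i, F i = 0.
Proof.
move=> /psumr_eq0P F0 i; apply/eqP; rewrite -sqrf_eq0; apply/eqP.
by apply: F0 => // j _; apply: sqr_ge0.
Qed.

Section Clifford.
Variables (R : realFieldType) (n m : nat) (J : 'I_m -> 'M[R]_n).
Hypothesis J_clifford : forall i j, J i *m J j + J j *m J i = (2 * (i == j)%:R)%:M.

Lemma clifford_sqr (c : 'I_m -> R) :
  (\sum_i c i *: J i) *m (\sum_i c i *: J i) = (\sum_i c i ^+ 2)%:M.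
Proof.
set S := \sum_i c i *: J i.
have SS : S *m S = \sum_i \sum_j (c i * c j) *: (J i *m J j).
  rewrite mulmx_suml; apply: eq_bigr => i _; rewrite mulmx_sumr.
  by apply: eq_bigr => j _; rewrite -scalemxAl -scalemxAr scalerA.
have two_neq0 : (2 : R) != 0 by rewrite pnatr_eq0.
apply: (scalerI two_neq0); rewrite !scaler_nat !mulr2n.
rewrite {1}SS exchange_big /= SS -big_split /= raddf_sum -big_split /=.
apply: eq_bigr => i _; rewrite -big_split /=.
under eq_bigr => j _ do rewrite addrC [c j * _]mulrC -scalerDr J_clifford.
rewrite (bigD1 i) //= big1 => [|j ji]; last first.
  by rewrite eq_sym (negPf ji) mulr0 raddf0 scaler0.
by rewrite eqxx addr0 scale_scalar_mx mulr1 mulrC -expr2 mulr_natl mulr2n raddfD.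
Qed.

Lemma row_free_clifford (X : 'rV[R]_n) :
  X != 0 -> row_free (\matrix_i (X *m J i)).
Proof.
move=> X_neq0; apply: inj_row_free => r rM0.
set C := \sum_i r 0 i *: J i.
have XC0 : X *m C = 0.
  rewrite -rM0 [r *m _]mulmx_sum_row /C mulmx_sumr.
  by apply: eq_bigr => i _; rewrite rowK scalemxAr.
have : (\sum_i r 0 i ^+ 2) *: X = 0.
  by rewrite -mul_mx_scalar -clifford_sqr mulmxA XC0 mul0mx.
move/eqP; rewrite scaler_eq0 (negPf X_neq0) orbF => /eqP r0.
by apply/rowP => i; rewrite mxE (sum_sqr_eq0 r0).
Qed.

End Clifford.

Section SkewAdjoint.
Variables (R : realType) (n : nat) (G : 'M[R]_n).

Lemma skew_adjoint_sum m (J : 'I_m -> 'M[R]_n) (c : 'I_m -> R) :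
  (forall i, skew_adjoint G (J i)) -> skew_adjoint G (\sum_i c i *: J i).
Proof.
move=> J_skew x y; rewrite !mulmx_sumr gform_suml gform_sumr -sumrN.
by apply: eq_bigr => i _; rewrite -!scalemxAr gformZl gformZr J_skew mulrN.
Qed.

Lemma gform_skew_self (A : 'M[R]_n) x :
  G^T = G -> skew_adjoint G A -> gform G (x *m A) x = 0.
Proof.
by move=> G_sym A_skew; have := A_skew x x; rewrite (gformC _ (x *m A)) //; lra.
Qed.

Lemma skew_shift_kernel_isotropic (A : 'M[R]_n) t u v :
  skew_adjoint G A -> t != 0 ->
  u *m (t%:M + A) = 0 -> v *m (t%:M + A) = 0 -> gform G u v = 0.
Proof.
move=> A_skew t_neq0 uP vP.
have eig w : w *m (t%:M + A) = 0 -> w *m A = - (t *: w).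
  by rewrite mulmxDr mul_mx_scalar addrC => /eqP; rewrite addr_eq0 => /eqP.
have := A_skew u v; rewrite eig // eig // gformNl gformZl gformNr gformZr opprK.
move=> tuv; have /eqP : t * gform G u v = 0 by lra.
by rewrite mulf_eq0 (negPf t_neq0) => /eqP.
Qed.

End SkewAdjoint.

Section AntiCliffordJacobi.
Variables (R : realType) (n m : nat) (G : 'M[R]_n) (J : 'I_m -> 'M[R]_n).
Variables (mu0 : R) (mu : 'I_m -> R).
Hypotheses (G_sym : G^T = G) (G_unit : G \in unitmx).
Hypothesis J_skew : forall i, skew_adjoint G (J i).

Lemma jacobi_antiClifford X Y :
  jacobi_op G (antiClifford_tensor G J mu0 mu) X Y =
  mu0 *: (gform G X X *: Y - gform G Y X *: X) +
  \sum_i (3 * mu i * gform G (Y *m J i) X) *: (X *m J i).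
Proof.
apply: jacobi_opE => // W.
rewrite /antiClifford_tensor /R0 gformDl gform_suml gformZl gformDl gformNl !gformZl.
congr (_ + _).
by apply: eq_bigr => i _; rewrite /RJ gformZl gform_skew_self //; ring.
Qed.

End AntiCliffordJacobi.

Section Witness.
Variables (R : realType) (n m : nat) (G : 'M[R]_n) (J : 'I_m -> 'M[R]_n).
Variables (mu0 : R) (mu : 'I_m -> R).
Hypotheses (G_sym : G^T = G) (G_unit : G \in unitmx) (dim_gt : (2 * m < n)%N).
Hypothesis J_skew : forall i, skew_adjoint G (J i).
Hypothesis J_clifford : forall i j, J i *m J j + J j *m J i = (2 * (i == j)%:R)%:M.
Hypothesis mu_neq0 : forall i, mu i != 0.
Variables (th0 : R) (th : 'I_m -> R) (X : 'rV[R]_n).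
Hypotheses (th0_neq0 : th0 != 0) (X_neq0 : X != 0).
Hypothesis X_rel : th0 *: X + \sum_i th i *: (X *m J i) = 0.
Hypothesis th0_sqr : th0 ^+ 2 = \sum_i th i ^+ 2.
Hypothesis mu0_rel : \sum_i th i ^+ 2 = - mu0 * \sum_i th i ^+ 2 / (3 * mu i).

Let A : 'M[R]_n := \sum_i th i *: J i.
Let P : 'M[R]_n := th0%:M + A.
Let S : 'M[R]_(m, n) := \matrix_i (X *m J i).

Lemma sum_XJ : \sum_i th i *: (X *m J i) = - (th0 *: X).
Proof. by apply/eqP; rewrite -addr_eq0 addrC X_rel. Qed.

Lemma mulmx_shift (U : 'rV[R]_n) : U *m P = th0 *: U + \sum_i th i *: (U *m J i).
Proof.
by rewrite /P mulmxDr mul_mx_scalar mulmx_sumr; under eq_bigr do rewrite -scalemxAr.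
Qed.

Lemma shift_sqr : P *m P = (2 * th0) *: P.
Proof.
rewrite {1}/P mulmxDl mul_scalar_mx mulmxDr mul_mx_scalar clifford_sqr // -th0_sqr.
rewrite /P mulr_natl mulr2n !scalerDl !scalerDr !scale_scalar_mx -expr2.
by rewrite [th0 *: A + _]addrC.
Qed.

Lemma gform_XX : gform G X X = 0.
Proof.
have /eqP : th0 * gform G X X = 0.
  rewrite -gformZl -[th0 *: X]opprK -sum_XJ gformNl gform_suml big1 ?oppr0 // => i _.
  by rewrite gformZl gform_skew_self // mulr0.
by rewrite mulf_eq0 (negPf th0_neq0) => /eqP.
Qed.

Lemma rank_kermx_shift : (2 * \rank (kermx P) <= n)%N.
Proof.
apply: (isotropic_rank G_unit) => i j.
apply: (@skew_shift_kernel_isotropic _ _ _ A th0) => //; first exact: skew_adjoint_sum.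
  by rewrite -row_mul mulmx_ker row0.
by rewrite -row_mul mulmx_ker row0.
Qed.

Lemma rank_clifford_shift : (\rank (S *m P) < m)%N.
Proof.
apply: (@rank_lt_of_mul0 _ _ _ (\row_i th i)).
  apply/eqP => /rowP th_row0; move/negP: th0_neq0; apply.
  rewrite -sqrf_eq0 th0_sqr big1 // => i _.
  by have := th_row0 i; rewrite !mxE => ->; rewrite expr0n.
rewrite mulmxA [_ *m S]mulmx_sum_row /S.
under eq_bigr do rewrite rowK mxE.
by rewrite sum_XJ mulNmx -scalemxAl mulmx_shift X_rel scaler0 oppr0.
Qed.

Lemma exists_orthogonal_outside : exists U, gform G X U = 0 /\ ~~ (U *m P <= S)%MS.
Proof.
set Q := kermx (G *m X^T).
have : ~~ (Q *m P <= S)%MS.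
  have two_th0_neq0 : 2 * th0 != 0 by rewrite mulf_neq0 ?pnatr_eq0.
  apply/negP => /(rank_sub_scaled_idem shift_sqr two_th0_neq0).
  have := rank_orthogonal G_unit X_neq0; rewrite -/Q; have := rank_kermx_shift.
  have := rank_clifford_shift; have := mxrank_ker P; have := rank_leq_row P.
  set c := \rank (S *m P); lia.
case/row_subPn => i QPi; exists (row i Q); split; last by rewrite -row_mul.
by rewrite gformC // /gform -mulmxA -row_mul mulmx_ker row0 mxE.
Qed.

Lemma exists_test_vector U : ~~ (U *m P <= S)%MS ->
  exists Y, (forall i, gform G Y (X *m J i) = th i / (3 * mu i)) /\
            gform G Y (U *m P) = 1.
Proof.
move/(row_free_col_mx_rV (row_free_clifford J_clifford X_neq0)).
move/(gform_dual_exists G_unit (row_mx (\row_i (th i / (3 * mu i))) 1%:M)) => [Y YN].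
exists Y; split => [i|].
  by have := YN (lshift 1 i); rewrite rowKu rowK row_mxEl mxE.
by have := YN (rshift m 0); rewrite rowKd row_id row_mxEr mxE.
Qed.

Section TestVector.
Variable Y : 'rV[R]_n.
Hypothesis Y_XJ : forall i, gform G Y (X *m J i) = th i / (3 * mu i).

Lemma mu0_gform_YX : mu0 * gform G Y X = th0.
Proof.
apply: (mulfI th0_neq0); rewrite mulrCA.
have -> : th0 * gform G Y X = - \sum_i th i ^+ 2 / (3 * mu i).
  rewrite -gformZr -[th0 *: X]opprK -sum_XJ gformNr gform_sumr; congr (- _).
  by apply: eq_bigr => i _; rewrite gformZr Y_XJ mulrA -expr2.
by rewrite mulrN -mulNr -mu0_rel -th0_sqr expr2.
Qed.

Lemma jacobi_X_test_vector :
  jacobi_op G (antiClifford_tensor G J mu0 mu) X Y = 0.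
Proof.
rewrite jacobi_antiClifford // gform_XX scale0r sub0r scalerN scalerA mu0_gform_YX.
have coef i : 3 * mu i * gform G (Y *m J i) X = - th i.
  by rewrite J_skew Y_XJ; field; rewrite mu_neq0.
under eq_bigr do rewrite coef scaleNr.
by rewrite sumrN sum_XJ opprK addNr.
Qed.

Lemma gform_jacobi_test_vector U : gform G X U = 0 ->
  gform G (jacobi_op G (antiClifford_tensor G J mu0 mu) Y X) U = - gform G Y (U *m P).
Proof.
move=> XU; rewrite jacobi_antiClifford // mulmx_shift.
rewrite gformDl gformZl gformDl gformNl !gformZl XU mulr0 add0r (gformC X Y) //.
rewrite gform_suml gformDr gformZr gform_sumr opprD -sumrN.
congr (_ + _); first by rewrite mulrN mulrA mu0_gform_YX.
apply: eq_bigr => i _; rewrite gformZl gformZr (gformC (X *m J i)) // Y_XJ J_skew.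
by field; rewrite mu_neq0.
Qed.

End TestVector.

Theorem not_totally_jacobi_dual :
  ~ totally_jacobi_dual G (antiClifford_tensor G J mu0 mu).
Proof.
move=> dual; have [U [XU UPS]] := exists_orthogonal_outside.
have [Y [Y_XJ YUP]] := exists_test_vector UPS.
have Y_neq0 : Y != 0.
  by apply/eqP => Y0; move/eqP: YUP; rewrite Y0 /gform !mul0mx mxE eq_sym oner_eq0.
have eig : is_eigenvector (jacobi_op G (antiClifford_tensor G J mu0 mu) X) Y.
  by split=> //; exists 0; rewrite scale0r jacobi_X_test_vector.
have [_ [lam JYX]] := dual X Y X_neq0 eig.
have /eqP := gform_jacobi_test_vector Y_XJ XU.
by rewrite JYX gformZl XU mulr0 YUP eq_sym oppr_eq0 oner_eq0.
Qed.

End Witness.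

Theorem mainTheorem7 (R : realType) (n m : nat) (G : 'M[R]_n)
  (J : 'I_m -> 'M[R]_n) (mu0 : R) (mu : 'I_m -> R) :
  scalar_product_space G ->
  (n > 2 * m)%N ->
  (forall i, skew_adjoint G (J i)) ->
  (forall i j, J i *m J j + J j *m J i = (2 * (i == j)%:R)%:M) ->
  (forall i, mu i != 0) ->
  forall (theta0 : R) (theta : 'I_m -> R) (X : 'rV[R]_n),
    (theta0 != 0 \/ exists i, theta i != 0) ->
    X != 0 ->
    theta0 *: X + \sum_(i < m) theta i *: (X *m J i) = 0 ->
    theta0 ^+ 2 = \sum_(i < m) theta i ^+ 2 ->
    \sum_(i < m) theta i ^+ 2 = - mu0 * \sum_(i < m) theta i ^+ 2 / (3 * mu i) ->
    ~ totally_jacobi_dual G (antiClifford_tensor G J mu0 mu).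
Proof.
move=> [G_sym G_unit] dim_gt J_skew J_clifford mu_neq0 th0 th X th_neq0 X_neq0.
move=> X_rel th0_sqr mu0_rel.
have th0_neq0 : th0 != 0.
  apply/eqP => th00; move: th0_sqr; rewrite th00 expr0n /= => /esym /sum_sqr_eq0 th0s.
  by case: th_neq0 => [|[i]]; rewrite ?th00 ?th0s eqxx.
exact: (not_totally_jacobi_dual G_sym G_unit dim_gt J_skew J_clifford mu_neq0
  th0_neq0 X_neq0 X_rel th0_sqr mu0_rel).
Qed.
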